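(* Consider full-batch Noisy-SGD ($\mathcal{B}_t=\mathcal{B}_t'=[n]$) on adjacent datasets $\mathcal{D},\mathcal{D}'$, with iterates $W_t,W_t'$ and $W_0=W_0'$. Suppose the gradient update maps $\psi_t(x)=x-\frac{\eta}{n}\sum_{i\in[n]}\Pi_{B_K}[\nabla\ell_i(x)]$ and $\psi_t'(x)=x-\frac{\eta}{n}\sum_{i\in[n]}\Pi_{B_K}[\nabla\ell_i'(x)]$ are $c$-Lipschitz for some $c\ge0$. Then for all $t\ge0$, $$W_\infty(W_t,W_t')\le\min(D_t,D),\qquad D_t=\min\big(cD_{t-1}+2\eta K/n,\ D_{t-1}+2\eta K\big),\quad D_0=0.$$
   Context: Setting (Noisy-SGD). Let $\mathcal{K}\subset\mathbb{R}^d$ be a nonempty closed convex set of diameter $D$, $\Pi_{\mathcal{K}}$ the Euclidean projection. Let $\ell(\cdot;d)$, $d\in\mathcal{X}$, be differentiable losses on $\mathcal{K}$; for $\mathcal{D}=(d_1,\dots,d_n)$ write $\ell_i=\ell(\cdot;d_i)$, and $\ell_i'=\ell(\cdot;d_i')$ for $\mathcal{D}'$. $\Pi_{B_K}(v)=v\min(1,K/\|v\|)$. Noisy-SGD: $W_{t+1}=\Pi_{\mathcal{K}}\big[W_t-\eta\frac1b\sum_{i\in\mathcal{B}_t}\Pi_{B_K}[\nabla\ell_i(W_t)]+G_t\big]$, $G_t$ i.i.d. $N(0,\sigma^2I_d)$ independent of everything else; $W_t'$ is defined analogously on $\mathcal{D}'$ with its own noise $G_t'$ of the same law. Adjacent datasets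 differ in exactly one index. The infinite Wasserstein distance between laws $\mu,\nu$ on $\mathbb{R}^d$ is $W_\infty(\mu,\nu)=\inf_{\gamma\in\Gamma(\mu,\nu)}\operatorname{ess\,sup}_{(X,Y)\sim\gamma}\|X-Y\|$, $\Gamma(\mu,\nu)$ the set of couplings; $W_\infty(W_t,W_t')$ refers to the laws of $W_t,W_t'$. *)

From HB Require Import structures.
From mathcomp Require Import all_boot all_order all_algebra.
From mathcomp Require Import all_classical all_reals all_analysis.
From mathcomp Require Import ess_sup_inf.
Set Implicit Arguments. Unset Strict Implicit. Unset Printing Implicit Defensive.
Import Order.TTheory GRing.Theory Num.Theory.
Import numFieldNormedType.Exports.
Local Open Scope classical_set_scope.
Local Open Scope ring_scope.

Section Defs.
Variables (R : realType) (d : nat).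

Definition enorm (v : 'rV[R]_d) : R := Num.sqrt (\sum_(j < d) v ord0 j ^+ 2).

Definition edot (u v : 'rV[R]_d) : R := \sum_(j < d) u ord0 j * v ord0 j.

(** Pi_{B_K}(v) = v * min(1, K/||v||)  (with v = 0 mapped to 0). *)
Definition clipK (K : R) (v : 'rV[R]_d) : 'rV[R]_d :=
  Num.min 1 (K / enorm v) *: v.

Definition vecB : Type := g_sigma_algebraType (@open 'rV[R]_d).

Definition law dO (Omega : measurableType dO) (P : probability Omega R)
  (X : Omega -> 'rV[R]_d) : set vecB -> \bar R :=
  fun A => P (X @^-1` A).

Definition coupling (mu nu : set vecB -> \bar R)
  (g : probability (vecB * vecB)%type R) : Prop :=
  (forall A : set vecB, measurable A -> g (A `*` setT) = mu A) /\
  (forall A : set vecB, measurable A -> g (setT `*` A) = nu A).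

Definition Winf (mu nu : set vecB -> \bar R) : \bar R :=
  ereal_inf [set ess_sup g (fun p : vecB * vecB => (enorm (p.1 - p.2))%:E)
            | g in coupling mu nu].


Definition psi (eta Kc : R) (n : nat) (g : 'I_n -> 'rV[R]_d -> 'rV[R]_d)
  (x : 'rV[R]_d) : 'rV[R]_d :=
  x - (eta / n%:R) *: \sum_(i < n) clipK Kc (g i x).

Fixpoint nsgd (Omega : Type) (PiK : 'rV[R]_d -> 'rV[R]_d)
  (step : 'rV[R]_d -> 'rV[R]_d) (G : nat -> Omega -> 'rV[R]_d)
  (w0 : 'rV[R]_d) (t : nat) (om : Omega) : 'rV[R]_d :=
  match t with
  | 0%N => w0
  | t'.+1 => PiK (step (nsgd PiK step G w0 t' om) + G t' om)
  end.

Definition mutually_independent dO (Omega : measurableType dO)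
  (P : probability Omega R) (I : eqType) (Y : I -> Omega -> R) : Prop :=
  forall (s : seq I) (B : I -> set R), uniq s -> (forall i, measurable (B i)) ->
    P (\bigcap_(i in [set` s]) (Y i @^-1` B i)) =
    (\prod_(i <- s) P (Y i @^-1` B i))%E.

(** (G_t)_t is an i.i.d. sequence of N(0, sigma^2 I_d) random vectors:
    all coordinates G_t[j] (over all t and j) are measurable, mutually
    independent, and each has law N(0, sigma^2). *)
Definition gaussian_noise dO (Omega : measurableType dO)
  (P : probability Omega R) (sigma : R) (G : nat -> Omega -> 'rV[R]_d) : Prop :=
  [/\ forall t (j : 'I_d), measurable_fun setT (fun om => G t om ord0 j),
      forall t (j : 'I_d) (B : set R), measurable B ->
        P ((fun om => G t om ord0 j) @^-1` B) = normal_prob 0 sigma B &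
      mutually_independent P (fun p : nat * 'I_d => fun om => G p.1 om ord0 p.2)].

End Defs.

Fixpoint Dseq (R : realType) (c eta Kc : R) (n : nat) (t : nat) : R :=
  match t with
  | 0%N => 0
  | t'.+1 => Num.min (c * Dseq c eta Kc n t' + 2 * eta * Kc / n%:R)
                     (Dseq c eta Kc n t' + 2 * eta * Kc)
  end.

From HB Require Import structures.
From mathcomp Require Import all_boot all_order all_algebra.
From mathcomp Require Import all_classical all_reals all_analysis.
From mathcomp Require Import ess_sup_inf.
From mathcomp Require Import ring lra.
Import Order.TTheory GRing.Theory Num.Theory.
Import numFieldNormedType.Exports.
Local Open Scope classical_set_scope.
Local Open Scope ring_scope.
Set Implicit Arguments. Unset Strict Implicit. Unset Printing Implicit Defensive.

(* Synchronous coupling.  The noises G and G' are both i.i.d. Gaussian, so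
   their paths have the same joint law (independence and the Gaussian
   marginals determine it on cylinders); hence W'_t has the same law as the
   run on D' driven by the noise G of the run on D.  Along each noise
   realization the noise cancels and the projection onto K is nonexpansive,
   so it suffices to compare psi x with psi' y: by the triangle inequality
   through psi y, only the one clipped gradient that changes contributes,
   giving c |x - y| + 2 eta K / n; bounding all clipped gradients by K gives
   |x - y| + 2 eta K; and both iterates stay in K, at distance at most D.
   The joint law of the two runs is then a coupling whose essential supremum
   distance is at most min(D_t, D). *)

Section Euclid.
Variables (R : realType) (d : nat).
Implicit Types u v w x y : 'rV[R]_d.

Definition sqnorm v : R := \sum_(j < d) v ord0 j ^+ 2.

Lemma sqnorm_ge0 v : 0 <= sqnorm v.
Proof. by apply: sumr_ge0 => j _; exact: sqr_ge0. Qed.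

Lemma enormE v : enorm v = Num.sqrt (sqnorm v).
Proof. by []. Qed.

Lemma enorm_ge0 v : 0 <= enorm v.
Proof. exact: sqrtr_ge0. Qed.

Lemma sqr_enorm v : enorm v ^+ 2 = sqnorm v.
Proof. by rewrite sqr_sqrtr // sqnorm_ge0. Qed.

Lemma ler_enorm u v : (enorm u <= enorm v) = (sqnorm u <= sqnorm v).
Proof. by rewrite ler_sqrt ?sqnorm_ge0. Qed.

Lemma edotvv v : edot v v = sqnorm v.
Proof. by apply: eq_bigr => j _; rewrite expr2. Qed.

Lemma edotC u v : edot u v = edot v u.
Proof. by apply: eq_bigr => j _; rewrite mulrC. Qed.

Lemma edotBl u v w : edot (u - v) w = edot u w - edot v w.
Proof.
by rewrite /edot -sumrB; apply: eq_bigr => j _; rewrite !mxE mulrBl.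
Qed.

Lemma edotBr u v w : edot w (u - v) = edot w u - edot w v.
Proof. by rewrite edotC edotBl !(edotC w). Qed.

Lemma sqnorm_lin a b u v :
  sqnorm (a *: u + b *: v) = a ^+ 2 * sqnorm u + 2 * a * b * edot u v + b ^+ 2 * sqnorm v.
Proof.
rewrite /sqnorm /edot !mulr_sumr -!big_split /=; apply: eq_bigr => j _.
by rewrite !mxE; ring.
Qed.

Lemma sqnorm_eq0 v : sqnorm v = 0 -> v = 0.
Proof.
move=> /psumr_eq0P v0; apply/rowP => j; rewrite mxE.
by apply/eqP; rewrite -sqrf_eq0; apply/eqP/v0 => // i _; exact: sqr_ge0.
Qed.

Lemma enorm0 : enorm (0 : 'rV[R]_d) = 0.
Proof. by rewrite /enorm big1 ?sqrtr0 // => j _; rewrite mxE expr0n. Qed.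

Lemma enorm_eq0 v : enorm v = 0 -> v = 0.
Proof. by move=> v0; apply: sqnorm_eq0; rewrite -sqr_enorm v0 expr0n. Qed.

Lemma edot_sqr_le u v : edot u v ^+ 2 <= sqnorm u * sqnorm v.
Proof.
have [u0|] := eqVneq (sqnorm u) 0.
  rewrite (sqnorm_eq0 u0) /edot big1 ?expr0n /= ?mulr_ge0 ?sqnorm_ge0 //.
  by move=> j _; rewrite mxE mul0r.
move=> un0; have up : 0 < sqnorm u by rewrite lt0r un0 sqnorm_ge0.
have := sqnorm_ge0 (sqnorm u *: v + (- edot u v) *: u).
rewrite sqnorm_lin (edotC v u).
have -> : sqnorm u ^+ 2 * sqnorm v + 2 * sqnorm u * - edot u v * edot u v
    + (- edot u v) ^+ 2 * sqnorm u = sqnorm u * (sqnorm u * sqnorm v - edot u v ^+ 2).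
  by ring.
by rewrite pmulr_rge0 // subr_ge0.
Qed.

Lemma edot_le u v : edot u v <= enorm u * enorm v.
Proof.
apply: (le_trans (ler_norm _)).
rewrite -sqrtrM ?sqnorm_ge0 // -sqrtr_sqr.
by rewrite ler_sqrt ?mulr_ge0 ?sqnorm_ge0 // edot_sqr_le.
Qed.

Lemma enormD u v : enorm (u + v) <= enorm u + enorm v.
Proof.
rewrite [enorm (u + v)]enormE -(ger0_norm (addr_ge0 (enorm_ge0 u) (enorm_ge0 v))).
rewrite -sqrtr_sqr.
rewrite ler_sqrt ?sqr_ge0 //.
have := sqnorm_lin 1 1 u v; rewrite !scale1r => ->.
rewrite -!sqr_enorm sqrrD; have := edot_le u v; lra.
Qed.

Lemma enormN v : enorm (- v) = enorm v.
Proof. by rewrite /enorm; congr Num.sqrt; apply: eq_bigr => j _; rewrite mxE sqrrN. Qed.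

Lemma enormZ a v : enorm (a *: v) = `|a| * enorm v.
Proof.
rewrite /enorm -sqrtr_sqr -sqrtrM ?sqr_ge0 //; congr Num.sqrt.
by rewrite mulr_sumr; apply: eq_bigr => j _; rewrite mxE exprMn.
Qed.

Lemma enormB u v : enorm (u - v) <= enorm u + enorm v.
Proof. by rewrite -(enormN v) enormD. Qed.

Lemma enorm_sum n (F : 'I_n -> 'rV[R]_d) :
  enorm (\sum_(i < n) F i) <= \sum_(i < n) enorm (F i).
Proof.
elim/big_ind2: _ => [|a b x y ha hb|//]; first by rewrite enorm0.
by apply: le_trans (enormD _ _) _; exact: lerD.
Qed.

Lemma enorm_coord v (j : 'I_d) : `|v ord0 j| <= enorm v.
Proof.
rewrite -sqrtr_sqr ler_sqrt ?sqnorm_ge0 // /sqnorm (bigD1 j) //= lerDl.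
by apply: sumr_ge0 => i _; exact: sqr_ge0.
Qed.

(* Crude but sufficient: sqrt d <= d. *)
Lemma enorm_le_box v (e : R) : 0 <= e -> (forall j, `|v ord0 j| <= e) ->
  enorm v <= d%:R * e.
Proof.
move=> e0 ve; rewrite -(ger0_norm (mulr_ge0 (ler0n _ d) e0)) -sqrtr_sqr.
rewrite ler_sqrt ?sqr_ge0 //.
apply: (@le_trans _ _ (\sum_(j < d) e ^+ 2)).
  apply: ler_sum => j _; rewrite -real_normK ?num_real //.
  by rewrite lerXn2r ?nnegrE // normr_ge0.
rewrite sumr_const card_ord -[_ *+ d]mulr_natl exprMn; apply: ler_wpM2r; first exact: sqr_ge0.
by rewrite -natrX ler_nat; case: d => // k; rewrite expnS leq_pmulr.
Qed.

End Euclid.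

Section ConvexProjection.
Variables (R : realType) (d : nat) (K : set 'rV[R]_d) (PiK : 'rV[R]_d -> 'rV[R]_d).

Definition convex_set := forall x y (l : R), K x -> K y -> 0 <= l <= 1 ->
  K (l *: x + (1 - l) *: y).

Definition projection_onto := forall x,
  K (PiK x) /\ (forall y, K y -> enorm (x - PiK x) <= enorm (x - y)).

Hypotheses (convK : convex_set) (projK : projection_onto).

(* Minimality of the distance along the segment from PiK x towards y, to first order in the step. *)
Lemma projection_obtuse x y : K y -> edot (x - PiK x) (y - PiK x) <= 0.
Proof.
move=> Ky; set p := PiK x; have Kp : K p by case: (projK x).
set a := sqnorm (y - p); set b := edot (x - p) (y - p).
have segment l : 0 < l <= 1 -> 2 * l * b <= l ^+ 2 * a.
  move=> /andP[l0 l1].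
  have Kz : K (l *: y + (1 - l) *: p) by apply: convK => //; rewrite ltW.
  have := (projK x).2 _ Kz; rewrite ler_enorm.
  have -> : x - (l *: y + (1 - l) *: p) = 1 *: (x - p) + (- l) *: (y - p).
    by apply/rowP => j; rewrite !mxE; ring.
  rewrite sqnorm_lin -/p -/a -/b; lra.
rewrite leNgt; apply/negP => b0.
have a0 : 0 <= a by exact: sqnorm_ge0.
have ab0 : 0 < a + b by lra.
set l := b / (a + b).
have lab : l * (a + b) = b by rewrite /l mulfVK // gt_eqF.
have l0 : 0 < l by rewrite divr_gt0.
have l1 : l <= 1 by rewrite /l ler_pdivrMr // mul1r; lra.
have := segment l; rewrite l0 l1 => /(_ isT) seg_l.
have : 2 * b <= l * a.
  rewrite -(ler_pM2l l0); have -> : l * (2 * b) = 2 * l * b by ring.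
  by have -> : l * (l * a) = l ^+ 2 * a by ring.
nra.
Qed.

Lemma projection_nonexpansive x y : enorm (PiK x - PiK y) <= enorm (x - y).
Proof.
have hx := projection_obtuse x (proj1 (projK y)).
have hy := projection_obtuse y (proj1 (projK x)).
set p := PiK x in hx hy *; set q := PiK y in hx hy *.
have pq : sqnorm (p - q) <= edot (x - y) (p - q).
  move: hx hy; rewrite !edotBl !edotBr -!edotvv !edotBl !edotBr.
  rewrite ?(edotC q p) ?(edotC y p) ?(edotC q x) ?(edotC y x); lra.
have := edot_le (x - y) (p - q); rewrite -sqr_enorm in pq.
have := enorm_ge0 (p - q); have := enorm_ge0 (x - y); nra.
Qed.

Lemma projection_id x : K x -> PiK x = x.
Proof.
move=> Kx; have := (projK x).2 _ Kx; rewrite subrr enorm0 => le0.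
have : enorm (x - PiK x) = 0 by apply: le_anti; rewrite le0 enorm_ge0.
by move/enorm_eq0/eqP; rewrite subr_eq0 => /eqP.
Qed.

End ConvexProjection.

Section ClippedStep.
Variables (R : realType) (d : nat).

Lemma enorm_clipK (Kc : R) (v : 'rV[R]_d) : 0 < Kc -> enorm (clipK Kc v) <= Kc.
Proof.
move=> Kc0; rewrite /clipK enormZ.
have [v0|vn0] := eqVneq (enorm v) 0; first by rewrite v0 mulr0 ltW.
have vp : 0 < enorm v by rewrite lt0r vn0 enorm_ge0.
rewrite ger0_norm; last by rewrite le_min ler01 divr_ge0 // ltW.
apply: (@le_trans _ _ (Kc / enorm v * enorm v)); last by rewrite mulfVK // gt_eqF.
by rewrite ler_pM2r // ge_min lexx orbT.
Qed.

Variables (eta Kc : R) (n : nat) (g g' : 'I_n -> 'rV[R]_d -> 'rV[R]_d).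
Hypotheses (eta0 : 0 < eta) (Kc0 : 0 < Kc) (n0 : (0 < n)%N).

Let rate_ge0 : 0 <= eta / n%:R.
Proof. by rewrite divr_ge0 ?ler0n // ltW. Qed.

Lemma psiB x y : psi eta Kc g x - psi eta Kc g' y =
  (x - y) - (eta / n%:R) *: (\sum_(i < n) clipK Kc (g i x) - \sum_(i < n) clipK Kc (g' i y)).
Proof. by rewrite /psi scalerBr; apply/rowP => j; rewrite !mxE; ring. Qed.

Lemma enorm_psiB x y :
  enorm (psi eta Kc g x - psi eta Kc g' y) <= enorm (x - y) + 2 * eta * Kc.
Proof.
rewrite psiB; apply: le_trans (enormB _ _) _; rewrite lerD2l enormZ ger0_norm //.
have clip_sum (h : 'I_n -> 'rV[R]_d -> 'rV[R]_d) z : enorm (\sum_(i < n) clipK Kc (h i z)) <= n%:R * Kc.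
  apply: le_trans (enorm_sum _) _; apply: (@le_trans _ _ (\sum_(i < n) Kc)).
    by apply: ler_sum => i _; exact: enorm_clipK.
  by rewrite sumr_const card_ord mulr_natl.
apply: (@le_trans _ _ (eta / n%:R * (n%:R * Kc + n%:R * Kc))).
  by rewrite ler_wpM2l //; apply: le_trans (enormB _ _) _; rewrite lerD.
rewrite le_eqVlt; apply/orP; left; apply/eqP; field.
by rewrite pnatr_eq0 -lt0n.
Qed.

Lemma enorm_psiB_adjacent (j : 'I_n) y : (forall i, i != j -> g i = g' i) ->
  enorm (psi eta Kc g y - psi eta Kc g' y) <= 2 * eta * Kc / n%:R.
Proof.
move=> gg'; rewrite psiB subrr sub0r enormN enormZ ger0_norm //.
rewrite (bigD1 j) //= [X in _ - X](bigD1 j) //=.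
rewrite (eq_bigr (fun i => clipK Kc (g' i y))); last by move=> i /gg' ->.
rewrite opprD addrACA subrr addr0.
apply: (@le_trans _ _ (eta / n%:R * (Kc + Kc))).
  by rewrite ler_wpM2l //; apply: le_trans (enormB _ _) _; rewrite lerD ?enorm_clipK.
by rewrite le_eqVlt; apply/orP; left; apply/eqP; ring.
Qed.

End ClippedStep.

Lemma Dseq_ge0 (R : realType) (c eta Kc : R) (n t : nat) : 0 <= c -> 0 < eta -> 0 < Kc ->
  0 <= Dseq c eta Kc n t.
Proof.
move=> c0 eta0 Kc0; have b0 : 0 <= 2 * eta * Kc by nra.
elim: t => [//|t IH] /=; rewrite le_min; apply/andP; split.
  by apply: addr_ge0; [exact: mulr_ge0|rewrite divr_ge0].
exact: addr_ge0.
Qed.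

Section SynchronousRuns.
Variables (R : realType) (d : nat) (K : set 'rV[R]_d) (PiK : 'rV[R]_d -> 'rV[R]_d).
Variables (D c eta Kc : R) (n : nat) (step step' : 'rV[R]_d -> 'rV[R]_d).
Hypotheses (convK : convex_set K) (projK : projection_onto K PiK).
Hypothesis diamK : forall x y, K x -> K y -> enorm (x - y) <= D.
Hypothesis c0 : 0 <= c.
Hypothesis step_lipschitz : forall x y, K x -> K y ->
  enorm (step x - step y) <= c * enorm (x - y).
Hypothesis step_near : forall y, enorm (step y - step' y) <= 2 * eta * Kc / n%:R.
Hypothesis step_far : forall x y, enorm (step x - step' y) <= enorm (x - y) + 2 * eta * Kc.

Lemma nsgd_in (Omega : Type) (f : 'rV[R]_d -> 'rV[R]_d) (G : nat -> Omega -> 'rV[R]_d) w0 :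
  K w0 -> forall t om, K (nsgd PiK f G w0 t om).
Proof. by move=> Kw0 [|t] om //=; case: (projK (f (nsgd PiK f G w0 t om) + G t om)). Qed.

Lemma enorm_nsgd_step x y z : K x -> K y ->
  enorm (PiK (step x + z) - PiK (step' y + z)) <=
  Num.min (c * enorm (x - y) + 2 * eta * Kc / n%:R) (enorm (x - y) + 2 * eta * Kc).
Proof.
move=> Kx Ky; apply: le_trans (projection_nonexpansive convK projK _ _) _.
rewrite opprD addrACA subrr addr0 le_min step_far andbT.
have -> : step x - step' y = (step x - step y) + (step y - step' y) by rewrite addrA subrK.
by apply: le_trans (enormD _ _) _; rewrite lerD ?step_lipschitz.
Qed.

Lemma enorm_nsgd_sync (Omega : Type) (G : nat -> Omega -> 'rV[R]_d) w0 : K w0 ->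
  forall t om, enorm (nsgd PiK step G w0 t om - nsgd PiK step' G w0 t om) <=
    Num.min (Dseq c eta Kc n t) D.
Proof.
move=> Kw0; elim=> [|t IH] om.
  by have := diamK Kw0 Kw0; rewrite /= subrr enorm0 le_min lexx.
rewrite le_min; apply/andP; split; last by apply: diamK; exact: nsgd_in.
rewrite /=; set x := nsgd PiK step G w0 t om; set y := nsgd PiK step' G w0 t om.
have Kx : K x by exact: nsgd_in.
have Ky : K y by exact: nsgd_in.
have /andP[xyD _] : (enorm (x - y) <= Dseq c eta Kc n t) && (enorm (x - y) <= D).
  by rewrite -le_min; exact: IH.
apply: le_trans (enorm_nsgd_step _ Kx Ky) _.
rewrite le_min !ge_min !lerD2r xyD orbT andbT.
by rewrite ler_wpM2l.
Qed.

End SynchronousRuns.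

Section BorelVectors.
Variables (R : realType) (d : nat).
Local Notation V := 'rV[R]_d.

Lemma ball_coordP (v w : V) e : 0 < e ->
  ball v e w <-> forall j, `|v ord0 j - w ord0 j| < e.
Proof.
move=> e0; split; first by move=> [_ vw] j; have := vw ord0 j.
by move=> vw; split => // i j; rewrite (ord1 i); exact: vw.
Qed.

Lemma measurable_coord (j : 'I_d) : measurable_fun setT (fun v : vecB R d => v ord0 j).
Proof.
apply: (measurability _ (measurable_realfun.RGenOpens.measurableE R)).
move=> _ [_ [a [b ->] <-]]; rewrite setTI; apply: sub_sigma_algebra.
by have /continuousP := @coord_continuous R 1 d ord0 j; apply; exact: interval_open.
Qed.

Lemma lipschitz_continuous (h : V -> V) (L : R) : 0 <= L ->
  (forall x y, enorm (h x - h y) <= L * enorm (x - y)) -> continuous h.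
Proof.
move=> L0 hL v s /= /nbhs_ballP [e e0 es]; apply/nbhs_ballP.
have dL0 : 0 < L * d%:R + 1 by rewrite ltr_wpDl // mulr_ge0.
set del := e / (L * d%:R + 1); have del0 : 0 < del by rewrite divr_gt0.
exists del => // w /(ball_coordP _ _ del0) vw; apply: es; apply/ball_coordP => // j.
apply: (@le_lt_trans _ _ (enorm (h w - h v))).
  by rewrite distrC; have := enorm_coord (h w - h v) j; rewrite !mxE.
apply: le_lt_trans (hL _ _) _.
have wv : enorm (w - v) <= d%:R * del.
  by apply: enorm_le_box (ltW del0) _ => i; rewrite !mxE distrC ltW.
apply: le_lt_trans (ler_wpM2l L0 wv) _.
rewrite /del !mulrA ltr_pdivrMr // mulrDr mulr1 [e * _]mulrC ltrDl.
exact: e0.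
Qed.

(* Rational boxes form a countable base of the topology. *)
Definition rat_box (p : 'rV[rat]_d * rat) : set V :=
  [set w | forall j, `|ratr (p.1 ord0 j) - w ord0 j| < ratr p.2].

Lemma open_bigcup_rat_box (U : set V) : open U ->
  U = \bigcup_(p : 'rV[rat]_d * rat) (rat_box p `&` [set _ | rat_box p `<=` U]).
Proof.
move=> oU; apply/seteqP; split; last by move=> w [p _ [bw bU]]; exact: bU.
move=> x Ux.
have /nbhs_ballP [e /= e0 eU] : nbhs x U by apply: open_nbhs_nbhs; split.
have [r] := @rat_in_itvoo R 0 (e / 2) ltac:(by rewrite divr_gt0).
rewrite in_itv /= => /andP[r0 r2].
have qx (j : 'I_d) : exists q : rat, ratr q \in `](x ord0 j - ratr r), (x ord0 j + ratr r)[.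
  by apply: rat_in_itvoo; lra.
have [q qxP] := choice qx.
exists (\row_j q j, r) => //; split.
  by move=> j /=; rewrite mxE distrC ltr_distlC; have := qxP j; rewrite in_itv /=.
move=> w bw; apply: eU; apply/ball_coordP => // j.
have := bw j; rewrite /= mxE ltr_distlC => /andP[qw1 qw2].
have := qxP j; rewrite in_itv /= => /andP[xq1 xq2].
rewrite ltr_distlC; apply/andP; split; lra.
Qed.

Lemma measurable_fun_coord dT (T : measurableType dT) (f : T -> vecB R d) :
  (forall j, measurable_fun setT (fun t => f t ord0 j)) -> measurable_fun setT f.
Proof.
move=> mf; apply: (@measurability _ _ _ _ _ _ (@open V : set (set (vecB R d)))) => //.
move=> _ [U oU <-]; rewrite setTI (open_bigcup_rat_box oU) preimage_bigcup.
apply: countable_bigcupT_measurable; first exact: countableP.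
move=> p; rewrite preimage_setI; apply: measurableI.
  have -> : f @^-1` rat_box p = \bigcap_(j in [set: 'I_d]) ((fun t => f t ord0 j) @^-1`
      `](ratr (p.1 ord0 j) - ratr p.2), (ratr (p.1 ord0 j) + ratr p.2)[).
    apply/seteqP; split => t /=.
      by move=> fp j _ /=; rewrite in_itv /= -ltr_distlC; exact: fp.
    by move=> fp j; rewrite ltr_distlC; have := fp j I; rewrite /= in_itv.
  apply: fin_bigcap_measurable; first exact: finite_finset.
  by move=> j _; rewrite -[X in measurable X]setTI; apply: mf.
have [pU|pU] := pselect (rat_box p `<=` U).
  by have -> : f @^-1` [set _ | rat_box p `<=` U] = setT by apply/seteqP; split.
by have -> : f @^-1` [set _ | rat_box p `<=` U] = set0 by apply/seteqP; split.
Qed.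

Lemma measurableT_comp_continuous dT (T : measurableType dT) (F : T -> vecB R d)
    (h : V -> V) :
  measurable_fun setT F -> continuous h -> measurable_fun setT (fun t => (h (F t) : vecB R d)).
Proof.
move=> mF /continuousP ch.
apply: (@measurability _ _ _ _ _ _ (@open V : set (set (vecB R d)))) => //.
move=> _ [U oU <-]; rewrite setTI.
have hU : measurable (h @^-1` U : set (vecB R d)) by apply: sub_sigma_algebra; exact: ch.
by have := mF measurableT _ hU; rewrite setTI.
Qed.

End BorelVectors.

Section NoisePaths.
Variables (R : realType) (d : nat).
Local Notation I := (nat * 'I_d)%type.

Definition cylinder : set (set (I -> R)) :=
  [set A | exists (s : seq I) (B : I -> set R), [/\ uniq s, (forall i, measurable (B i)) &
     A = \bigcap_(i in [set` s]) ((fun z : I -> R => z i) @^-1` B i)]].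

(* The product sigma-algebra on the coordinates G_t[j] of a noise path. *)
Definition path_space := g_sigma_algebraType cylinder.

Lemma cylinder_setI : setI_closed cylinder.
Proof.
move=> _ _ [s1 [B1 [u1 m1 ->]]] [s2 [B2 [u2 m2 ->]]].
exists (undup (s1 ++ s2)),
  (fun i => (if i \in s1 then B1 i else setT) `&` (if i \in s2 then B2 i else setT)).
split; first exact: undup_uniq.
  by move=> i; apply: measurableI; [case: (i \in s1)|case: (i \in s2)].
apply/seteqP; split => z /=.
  move=> [z1 z2] i; rewrite /= mem_undup mem_cat => /orP si; split.
    by case: ifP => [/z1|//]; apply.
  by case: ifP => [/z2|//]; apply.
move=> z12; split => i /= si; have := z12 i; rewrite /= mem_undup mem_cat.
  by rewrite si => /(_ isT) [+ _]; rewrite /= ?si.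
by rewrite si orbT => /(_ isT) [_]; rewrite /= ?si.
Qed.

Lemma cylinder_setT : cylinder setT.
Proof. by exists [::], (fun _ => setT); split => //; apply/seteqP; split => z // _ i. Qed.

Lemma measurable_eval (i : I) : measurable_fun setT (fun z : path_space => z i).
Proof.
move=> _ B mB; rewrite setTI; apply: sub_sigma_algebra.
exists [:: i], (fun _ => B); split => //.
apply/seteqP; split => z /=; first by move=> Bz k; rewrite /= inE => /eqP ->.
by move=> Bz; apply: (Bz i); rewrite /= inE.
Qed.

Variables (dO : measure_display) (Omega : measurableType dO) (P : probability Omega R).

Definition noise_path (G : nat -> Omega -> 'rV[R]_d) : Omega -> path_space :=
  fun om i => G i.1 om ord0 i.2.

Lemma noise_path_cylinder (G : nat -> Omega -> 'rV[R]_d) (s : seq I) (B : I -> set R) :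
  noise_path G @^-1` (\bigcap_(i in [set` s]) ((fun z : I -> R => z i) @^-1` B i)) =
  \bigcap_(i in [set` s]) ((fun om => G i.1 om ord0 i.2) @^-1` B i).
Proof. by apply/seteqP; split => om /= Gom i si; exact: Gom. Qed.

Lemma measurable_noise_path (G : nat -> Omega -> 'rV[R]_d) :
  (forall t j, measurable_fun setT (fun om => G t om ord0 j)) ->
  measurable_fun setT (noise_path G).
Proof.
move=> mG; apply: (@measurability _ _ _ _ _ _ (cylinder : set (set path_space))) => //.
move=> _ [_ [s [B [us mB ->]]] <-]; rewrite setTI noise_path_cylinder.
apply: fin_bigcap_measurable; first exact: finite_seq.
by move=> i _; rewrite -[X in measurable X]setTI; apply: mG.
Qed.

(* Independence and Gaussian marginals fix the law on cylinders, a generating pi-system. *)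
Lemma gaussian_noise_path_law (sigma : R) (G G' : nat -> Omega -> 'rV[R]_d) :
  gaussian_noise P sigma G -> gaussian_noise P sigma G' ->
  forall A : set path_space, measurable A ->
    P (noise_path G @^-1` A) = P (noise_path G' @^-1` A).
Proof.
move=> [mG lawG indG] [mG' lawG' indG'] A mA.
have mfunG : noise_path G \in mfun by rewrite inE; exact: measurable_noise_path.
have mfunG' : noise_path G' \in mfun by rewrite inE; exact: measurable_noise_path.
pose X := mfun_Sub mfunG; pose X' := mfun_Sub mfunG'.
change (distribution P X A = distribution P X' A).
apply: (@measure_unique _ R path_space (cylinder : set (set path_space)) (fun _ => setT)
   erefl cylinder_setI _ _ (distribution P X) (distribution P X')) => //.
- by move=> _; exact: cylinder_setT.
- by rewrite bigcup_const.
- move=> _ [s [B [us mB ->]]].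
  change (P (noise_path G @^-1` (\bigcap_(i in [set` s]) ((fun z : I -> R => z i) @^-1` B i)))
    = P (noise_path G' @^-1` (\bigcap_(i in [set` s]) ((fun z : I -> R => z i) @^-1` B i)))).
  rewrite !noise_path_cylinder (indG s B us mB) (indG' s B us mB).
  by apply: eq_bigr => i _; rewrite lawG // lawG'.
- move=> _; change (P (noise_path G @^-1` setT) < +oo)%E.
  by rewrite preimage_setT probability_setT ltry.
Qed.

End NoisePaths.

Section NsgdPaths.
Variables (R : realType) (d : nat) (PiK : 'rV[R]_d -> 'rV[R]_d) (w0 : 'rV[R]_d).

Definition nsgd_path (step : 'rV[R]_d -> 'rV[R]_d) : nat -> path_space R d -> 'rV[R]_d :=
  nsgd PiK step (fun t z => \row_j z (t, j)) w0.

Lemma nsgd_pathE dO (Omega : measurableType dO) step (G : nat -> Omega -> 'rV[R]_d) t :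
  nsgd PiK step G w0 t = nsgd_path step t \o noise_path G.
Proof.
apply: funext => om; elim: t => [//|t /= ->]; congr (PiK (step _ + _)).
by apply/rowP => j; rewrite mxE.
Qed.

Variables (K : set 'rV[R]_d) (step : 'rV[R]_d -> 'rV[R]_d) (L : R).
Hypotheses (convK : convex_set K) (projK : projection_onto K PiK) (Kw0 : K w0) (L0 : 0 <= L).
Hypothesis step_lipschitz : forall x y, K x -> K y ->
  enorm (step x - step y) <= L * enorm (x - y).

(* The iterates stay in K, where step agrees with the globally Lipschitz step \o PiK. *)
Lemma measurable_nsgd_path t :
  measurable_fun setT (nsgd_path step t : path_space R d -> vecB R d).
Proof.
elim: t => [|t IH]; first exact: measurable_cst.
have PiK_cont : continuous PiK.
  by apply: (@lipschitz_continuous _ _ _ 1) => // x y; rewrite mul1r (projection_nonexpansive convK projK).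
have stepPiK_cont : continuous (fun x => step (PiK x)).
  apply: (@lipschitz_continuous _ _ _ L) => // x y.
  apply: le_trans (step_lipschitz (proj1 (projK x)) (proj1 (projK y))) _.
  by rewrite ler_wpM2l // (projection_nonexpansive convK projK).
apply: measurableT_comp_continuous PiK_cont.
apply: measurable_fun_coord => j.
have -> : (fun z => (step (nsgd_path step t z) + \row_j0 z (t, j0)) ord0 j) =
    (fun z => (step (PiK (nsgd_path step t z)) : vecB R d) ord0 j + z (t, j)).
  by apply: funext => z; rewrite !mxE (projection_id projK) //; exact: nsgd_in.
apply: measurable_realfun.measurable_funD; last exact: measurable_eval.
exact: measurableT_comp (measurable_coord j) (measurableT_comp_continuous IH stepPiK_cont).
Qed.

Lemma measurable_nsgd dO (Omega : measurableType dO) (G : nat -> Omega -> 'rV[R]_d) t :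
  (forall t j, measurable_fun setT (fun om => G t om ord0 j)) ->
  measurable_fun setT (nsgd PiK step G w0 t : Omega -> vecB R d).
Proof.
move=> mG; rewrite nsgd_pathE.
exact: measurableT_comp (measurable_nsgd_path t) (measurable_noise_path mG).
Qed.

End NsgdPaths.

Section Coupling.
Variables (R : realType) (d : nat).
Local Notation pairs := (vecB R d * vecB R d)%type.

Lemma measurable_sqnorm_dist : measurable_fun setT (fun p : pairs => sqnorm (p.1 - p.2)).
Proof.
apply: measurable_sum => j; apply: measurable_realfun.measurable_funX.
have -> : (fun p : pairs => (p.1 - p.2) ord0 j) =
    (fun p : pairs => p.1 ord0 j) \- (fun p : pairs => p.2 ord0 j).
  by apply: funext => p; rewrite !mxE.
apply: measurable_realfun.measurable_funB.
  exact: measurableT_comp (measurable_coord j) measurable_fst.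
exact: measurableT_comp (measurable_coord j) measurable_snd.
Qed.

Lemma ess_sup_dist_le (g : probability pairs R) (M : R) : 0 <= M ->
  g [set p | M ^+ 2 < sqnorm (p.1 - p.2)] = 0%E ->
  (ess_sup g (fun p : pairs => (enorm (p.1 - p.2))%:E) <= M%:E)%E.
Proof.
move=> M0 gM; apply: ereal_inf_lbound => /=.
exists [set p | M ^+ 2 < sqnorm (p.1 - p.2)]; split => //.
  rewrite -[X in measurable X]setTI.
  have := measurable_sqnorm_dist measurableT (measurable_itv `]M ^+ 2, +oo[).
  by congr measurable; apply/seteqP; split => p /=; rewrite in_itv /= andbT.
move=> p /= /negP; rewrite lee_fin -ltNge => Mp.
by rewrite -sqr_enorm ltr_pXn2r // ?nnegrE // enorm_ge0.
Qed.

(* Any two random vectors on a common probability space realize a coupling of their laws. *)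
Lemma Winf_le_pointwise dO (Omega : measurableType dO) (P : probability Omega R)
    (X Y : Omega -> 'rV[R]_d) (mu nu : set (vecB R d) -> \bar R) (M : R) :
  measurable_fun setT (X : Omega -> vecB R d) -> measurable_fun setT (Y : Omega -> vecB R d) ->
  (forall A, measurable A -> mu A = law P X A) ->
  (forall A, measurable A -> nu A = law P Y A) ->
  0 <= M -> (forall om, enorm (X om - Y om) <= M) ->
  (Winf mu nu <= M%:E)%E.
Proof.
move=> mX mY muX nuY M0 XY.
pose XY_pair om : pairs := (X om, Y om).
have XY_mfun : XY_pair \in mfun by rewrite inE; exact: measurable_fun_pair.
pose g := distribution P (mfun_Sub XY_mfun).
apply: (@le_trans _ _ (ess_sup g (fun p : pairs => (enorm (p.1 - p.2))%:E))).
  apply: ereal_inf_lbound; exists g => //; split => A mA.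
    by rewrite muX //; change (P (XY_pair @^-1` (A `*` setT)) = P (X @^-1` A));
      apply: congr1; apply/seteqP; split => om /=; [case|].
  by rewrite nuY //; change (P (XY_pair @^-1` (setT `*` A)) = P (Y @^-1` A));
    apply: congr1; apply/seteqP; split => om /=; [case|].
apply: ess_sup_dist_le => //.
change (P (XY_pair @^-1` [set p | M ^+ 2 < sqnorm (p.1 - p.2)]) = 0%E).
have -> : XY_pair @^-1` [set p | M ^+ 2 < sqnorm (p.1 - p.2)] = set0.
  apply/seteqP; split => om //=; rewrite -sqr_enorm ltNge => /negP; apply.
  by rewrite ler_pXn2r ?nnegrE ?enorm_ge0.
exact: measure0.
Qed.

End Coupling.

Theorem mainTheorem7 (R : realType) (d n : nat) (X : Type)
  (loss : X -> 'rV[R]_d -> R) (grad : X -> 'rV[R]_d -> 'rV[R]_d)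
  (K : set 'rV[R]_d) (D : R) (PiK : 'rV[R]_d -> 'rV[R]_d)
  (eta Kc sigma c : R) (Dat Dat' : 'I_n -> X)
  (dO : measure_display) (Omega : measurableType dO) (P : probability Omega R)
  (G G' : nat -> Omega -> 'rV[R]_d) (w0 : 'rV[R]_d) :
  K !=set0 -> closed K ->
  (forall x y (l : R), K x -> K y -> 0 <= l <= 1 -> K (l *: x + (1 - l) *: y)) ->
  (forall x y, K x -> K y -> enorm (x - y) <= D) ->
  (forall x, K (PiK x) /\ (forall y, K y -> enorm (x - PiK x) <= enorm (x - y))) ->
  (forall z x, K x ->
     differentiable (loss z) x /\ (forall v, 'd (loss z) x v = edot (grad z x) v)) ->
  (exists j : 'I_n, Dat j <> Dat' j /\ (forall i, i != j -> Dat i = Dat' i)) ->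
  0 < eta -> 0 < Kc -> 0 < sigma -> 0 <= c ->
  (forall x y, K x -> K y ->
     enorm (psi eta Kc (fun i => grad (Dat i)) x - psi eta Kc (fun i => grad (Dat i)) y)
       <= c * enorm (x - y)) ->
  (forall x y, K x -> K y ->
     enorm (psi eta Kc (fun i => grad (Dat' i)) x - psi eta Kc (fun i => grad (Dat' i)) y)
       <= c * enorm (x - y)) ->
  gaussian_noise P sigma G -> gaussian_noise P sigma G' ->
  K w0 ->
  forall t : nat,
    (Winf (law P (nsgd PiK (psi eta Kc (fun i => grad (Dat i))) G w0 t))
          (law P (nsgd PiK (psi eta Kc (fun i => grad (Dat' i))) G' w0 t))
     <= (Num.min (Dseq c eta Kc n t) D)%:E)%E.
Proof.
move=> _ _ convK diamK projK _ [j [_ adjacent]] eta0 Kc0 _ c0 lip lip' noiseG noiseG' Kw0 t.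
have n0 : (0 < n)%N := leq_ltn_trans (leq0n _) (ltn_ord j).
have [measG _ _] := noiseG.
have D0 : 0 <= D by have := diamK _ _ Kw0 Kw0; rewrite subrr enorm0.
apply: (@Winf_le_pointwise R d _ _ P _ (nsgd_path PiK w0 (psi eta Kc (fun i => grad (Dat' i))) t \o noise_path G)
  _ _ _ (measurable_nsgd convK projK Kw0 c0 lip t measG)).
- apply: measurableT_comp (measurable_noise_path measG).
  exact: (measurable_nsgd_path convK projK Kw0 c0 lip' t).
- by [].
- move=> A mA; rewrite /law nsgd_pathE comp_preimage (gaussian_noise_path_law noiseG' noiseG) //.
  by rewrite -[X in measurable X]setTI; exact: (measurable_nsgd_path convK projK Kw0 c0 lip').
- by rewrite le_min Dseq_ge0 ?D0.
- move=> om; rewrite nsgd_pathE; apply: (enorm_nsgd_sync convK projK diamK c0 lip) => //.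
  + by move=> y; apply: (enorm_psiB_adjacent eta0 Kc0 (j := j)) => i /adjacent ->.
  + by move=> x y; exact: enorm_psiB.
Qed.
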